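(* For every integer $k\ge1$ and every $x\in\mathbb{C}$, $$\sum_{n=0}^{k}p(n)x^n=\det\big[d_{i-j}-x\,d_{i-j+1}\big]_{0\le i,j\le k-1}.$$
   Context: $p(n)$ is the number of partitions of $n$ ($p(0)=1$). With $q_m=m(3m-1)/2$ ($m\in\mathbb{Z}$) the generalized pentagonal numbers, $d_q=(-1)^m$ if $q=q_m$ for some $m$, $d_q=0$ for other integers $q\ge0$, and $d_q=0$ for $q<0$; thus $\sum_{q\ge0}d_qz^q=\prod_{k\ge1}(1-z^k)$. *)

From mathcomp Require Import all_boot all_order all_algebra.
From mathcomp Require Import complex Rstruct.
From Stdlib Require Rdefinitions.
Set Implicit Arguments. Unset Strict Implicit. Unset Printing Implicit Defensive.
Import Order.TTheory GRing.Theory Num.Theory.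

Definition Cplx : fieldType := complex Rdefinitions.R.

(* p(n): number of partitions of n, i.e. of nonincreasing sequences
   lambda_0 >= lambda_1 >= ... >= lambda_{n-1} >= 0 of naturals with sum n
   (a partition of n has at most n parts; pad with zeros). p 0 = 1. *)
Definition npart (n : nat) : nat :=
  #|[set l : {ffun 'I_n -> 'I_n.+1} |
      [forall i : 'I_n, forall j : 'I_n, (i <= j) ==> (l j <= l i)]
      && ((\sum_(i < n) (l i : nat)) == n)]|.

Local Open Scope ring_scope.

Definition pent (m : int) : int := ((m * (3 * m - 1)) %/ 2)%Z.

(* d_q = (-1)^m if q = q_m for some m in Z, 0 otherwise (and 0 for q < 0).
   Any m with q_m = q >= 0 satisfies |m| <= q, so searching m in [-q, q]
   is exhaustive. *)
Definition dpent (q : int) : int :=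
  if q < 0 then 0 else
  match [pick i : 'I_(2 * `|q|).+1 | pent (i%:Z - `|q|%:Z) == q] with
  | Some i => (-1) ^+ `|i%:Z - `|q|%:Z|%N
  | None => 0
  end.

(* Euler's pentagonal theorem in the finite form
   prod_(1 <= i <= n) (1 - x^i) = sum_(|m| <= n) (-1)^m x^(q_m) + O(x^(n+1)),
   which follows from Shanks' telescoping identity, together with the generating
   function of partitions gives sum_(q <= n) d_q p(n - q) = [n = 0]. Hence the lower
   triangular Toeplitz matrix P = (p(i - j)) is the inverse of (d_(i-j)), and P times
   the matrix of the theorem is 1 - x (S - c e_0^T), where S is the superdiagonal shift
   and c_i = p(i + 1). Adding x^j times row j to row 0 turns the first row into
   (sum_(n <= k) p(n) x^n, 0, ..., 0) and leaves an upper unitriangular minor. *)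

From mathcomp Require Import all_boot all_order all_algebra.
From mathcomp Require Import complex Rstruct.
From mathcomp Require Import zify ring.
Set Implicit Arguments. Unset Strict Implicit. Unset Printing Implicit Defensive.

Lemma sum_count_mem (N : nat) (F : nat -> nat) (s : seq nat) :
  all (fun v => v <= N) s ->
  \sum_(v <- s) F v = \sum_(v < N.+1) F v * count_mem (v : nat) s.
Proof.
elim: s => [_|a s IHs] /=; first by rewrite big_nil big1 // => v _; rewrite muln0.
case/andP=> aN sN; rewrite big_cons IHs //.
under [RHS]eq_bigr do rewrite mulnDr.
rewrite big_split /=; congr (_ + _).
rewrite (bigD1 (Ordinal (aN : a < N.+1))) //= eqxx muln1 big1 ?addn0 //.
by move=> v; rewrite -val_eqE /= eq_sym => /negbTE->; rewrite muln0.
Qed.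

Definition partitions n := [set l : {ffun 'I_n -> 'I_n.+1} |
  [forall i : 'I_n, forall j : 'I_n, (i <= j) ==> (l j <= l i)]
  && ((\sum_(i < n) (l i : nat)) == n)].

(* [m j] is the number of parts equal to [j.+1]. *)
Definition multiplicities N n :=
  [set m : {ffun 'I_N -> 'I_N.+1} | \sum_(j < N) j.+1 * m j == n].

Section PartitionMultiplicities.
Variables N n : nat.
Hypothesis n_le_N : n <= N.

Definition parts (l : {ffun 'I_n -> 'I_n.+1}) := [seq (l i : nat) | i <- enum 'I_n].

Lemma size_parts l : size (parts l) = n.
Proof. by rewrite size_map size_enum_ord. Qed.

Lemma nth_parts l (i : 'I_n) : nth 0 (parts l) i = l i.
Proof. by rewrite (nth_map i) ?size_enum_ord // nth_ord_enum. Qed.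

Lemma parts_bounded l : all (fun v => v <= N) (parts l).
Proof. by apply/allP => v /mapP [i _ ->]; move: (ltn_ord (l i)); lia. Qed.

Lemma sorted_parts l : l \in partitions n -> sorted geq (parts l).
Proof.
rewrite inE => /andP [/forallP l_noninc _]; apply/(sortedP 0) => i.
rewrite size_parts => lt_i1_n; have lt_i_n : i < n by lia.
rewrite (nth_parts l (Ordinal lt_i_n)) (nth_parts l (Ordinal lt_i1_n)).
by move: (l_noninc (Ordinal lt_i_n)) => /forallP /(_ (Ordinal lt_i1_n)) /implyP /= ->.
Qed.

Definition mult_of_partition l : {ffun 'I_N -> 'I_N.+1} :=
  [ffun j : 'I_N => inord (count_mem j.+1 (parts l))].

Lemma mult_of_partitionE l (j : 'I_N) :
  mult_of_partition l j = count_mem j.+1 (parts l) :> nat.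
Proof.
by rewrite ffunE inordK //; apply: leq_ltn_trans (count_size _ _) _; rewrite size_parts; lia.
Qed.

Lemma mult_of_partition_in l : l \in partitions n -> mult_of_partition l \in multiplicities N n.
Proof.
rewrite !inE => /andP [_ /eqP sum_l]; apply/eqP.
under eq_bigr do rewrite mult_of_partitionE.
rewrite -[RHS]sum_l (_ : \sum_(i < n) (l i : nat) = \sum_(v <- parts l) v).
  by rewrite (sum_count_mem id (parts_bounded l)) big_ord_recl.
by rewrite big_map big_enum.
Qed.

Lemma mult_of_partition_inj : {in partitions n &, injective mult_of_partition}.
Proof.
move=> l1 l2 l1P l2P eq_m.
have count_zero l : count_mem 0 (parts l) = n - \sum_(j < N) mult_of_partition l j.
  have := sum_count_mem (fun _ => 1) (parts_bounded l).
  rewrite sum1_size size_parts big_ord_recl /=.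
  under eq_bigr do rewrite mul1n -mult_of_partitionE.
  by lia.
have eq_count v : count_mem v (parts l1) = count_mem v (parts l2).
  case: (ltnP N v) => [lt_N_v | ].
    have no_v l : count_mem v (parts l) = 0.
      by apply/count_memPn/negP => /(allP (parts_bounded l)) /=; lia.
    by rewrite !no_v.
  case: v => [_ | v lt_v_N]; first by rewrite !count_zero eq_m.
  by rewrite -!(mult_of_partitionE _ (Ordinal lt_v_N)) eq_m.
have geq_anti : antisymmetric geq by move=> a b; rewrite andbC => /anti_leq.
have := sorted_eq (rev_trans leq_trans) geq_anti (sorted_parts l1P) (sorted_parts l2P).
move=> /(_ (introT allP (fun v _ => introT eqP (eq_count v)))) eq_parts.
by apply/ffunP => i; apply/val_inj; rewrite /= -!nth_parts eq_parts.
Qed.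

Definition parts_of_mult_unsorted (m : {ffun 'I_N -> 'I_N.+1}) :=
  flatten [seq nseq (m j) j.+1 | j <- enum 'I_N] ++ nseq (n - \sum_(j < N) (m j : nat)) 0.

Definition parts_of_mult m := sort geq (parts_of_mult_unsorted m).

Lemma perm_parts_of_mult m : perm_eq (parts_of_mult m) (parts_of_mult_unsorted m).
Proof. exact: permEl (perm_sort geq _). Qed.

Lemma sorted_parts_of_mult m : sorted geq (parts_of_mult m).
Proof. by apply: sort_sorted => a b; apply: leq_total. Qed.

Lemma sumn_map_enum (h : 'I_N -> nat) : sumn [seq h j | j <- enum 'I_N] = \sum_j h j.
Proof. by rewrite sumnE big_map big_enum. Qed.

Lemma count_parts_of_mult m (j : 'I_N) : count_mem j.+1 (parts_of_mult m) = m j.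
Proof.
rewrite (permP (perm_parts_of_mult m)) count_cat count_nseq mul0n addn0.
rewrite count_flatten -map_comp sumn_map_enum.
under eq_bigr do rewrite /= count_nseq /=.
rewrite (bigD1 j) //= eqxx mul1n big1 ?addn0 // => j' ne_j'_j.
by rewrite eqSS -val_eqE /= in ne_j'_j *; rewrite (negbTE ne_j'_j) mul0n.
Qed.

Lemma sumn_parts_of_mult m : sumn (parts_of_mult m) = \sum_(j < N) j.+1 * m j.
Proof.
rewrite (perm_sumn (perm_parts_of_mult m)) sumn_cat sumn_nseq mul0n addn0.
rewrite sumn_flatten -map_comp sumn_map_enum.
by apply: eq_bigr => j _; rewrite /= sumn_nseq mulnC.
Qed.

Section OfMultiplicities.
Variable m : {ffun 'I_N -> 'I_N.+1}.
Hypothesis mP : m \in multiplicities N n.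

Lemma size_parts_of_mult : size (parts_of_mult m) = n.
Proof.
rewrite (perm_size (perm_parts_of_mult m)) size_cat size_nseq size_flatten /shape.
rewrite -map_comp sumn_map_enum.
under eq_bigr do rewrite /= size_nseq.
rewrite subnKC //; move: mP; rewrite inE => /eqP <-.
by apply: leq_sum => j _; rewrite mulSn leq_addr.
Qed.

Lemma parts_of_mult_bounded : all (fun v => v <= n) (parts_of_mult m).
Proof.
apply/allP => v; rewrite (perm_mem (perm_parts_of_mult m)) mem_cat.
case/orP => [/flattenP [s /mapP [j _ ->]] | ]; rewrite mem_nseq => /andP [m_j_gt0 /eqP ->] //.
move: mP; rewrite inE => /eqP <-.
by rewrite (bigD1 j) //=; apply: leq_trans (leq_addr _ _); rewrite leq_pmulr.
Qed.

Definition partition_of_mult : {ffun 'I_n -> 'I_n.+1} :=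
  [ffun i : 'I_n => inord (nth 0 (parts_of_mult m) i)].

Lemma partition_of_multE (i : 'I_n) : partition_of_mult i = nth 0 (parts_of_mult m) i :> nat.
Proof.
rewrite ffunE inordK // ltnS; apply: (allP parts_of_mult_bounded).
by rewrite mem_nth ?size_parts_of_mult.
Qed.

Lemma partition_of_mult_in : partition_of_mult \in partitions n.
Proof.
rewrite inE; apply/andP; split.
  apply/forallP => i; apply/forallP => j; apply/implyP => le_ij.
  rewrite !partition_of_multE.
  by apply: (sorted_leq_nth (rev_trans leq_trans) (@leqnn) 0 (sorted_parts_of_mult m));
    rewrite ?inE ?size_parts_of_mult.
under eq_bigr do rewrite partition_of_multE.
rewrite -(big_mkord xpredT (nth 0 (parts_of_mult m))) -{1}size_parts_of_mult -(big_nth 0 xpredT id).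
by rewrite -sumnE sumn_parts_of_mult; move: mP; rewrite inE.
Qed.

Lemma parts_partition_of_mult : parts partition_of_mult = parts_of_mult m.
Proof.
rewrite /parts (eq_map partition_of_multE) (map_comp (nth 0 (parts_of_mult m)) val).
by rewrite val_enum_ord -{1}size_parts_of_mult -/(mkseq _ _) mkseq_nth.
Qed.

Lemma partition_of_multK : mult_of_partition partition_of_mult = m.
Proof.
apply/ffunP => j; apply/val_inj.
by rewrite /= mult_of_partitionE parts_partition_of_mult count_parts_of_mult.
Qed.

End OfMultiplicities.

Lemma npart_multiplicities : npart n = #|multiplicities N n|.
Proof.
rewrite -[npart n]/#|partitions n| -(card_in_imset mult_of_partition_inj).
congr #|pred_of_set _|; apply/setP => m; apply/imsetP/idP => [[l lP ->] | mP].
  exact: mult_of_partition_in.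
by exists (partition_of_mult m); [exact: partition_of_mult_in | rewrite partition_of_multK].
Qed.

End PartitionMultiplicities.

Import Order.TTheory GRing.Theory Num.Theory.
Local Open Scope ring_scope.

Lemma pent_double (m : int) : 2 * pent m = m * (3 * m - 1).
Proof.
have [a [b [-> b01]]] : exists a b : int, m = 2 * a + b /\ (b = 0 \/ b = 1).
  by exists (m %/ 2)%Z, (m %% 2)%Z; split; [rewrite mulrC -divz_eq | lia].
rewrite /pent; case: b01 => ->.
  by rewrite (_ : _ * _ = (a * (6 * a - 1)) * 2) ?mulzK //; lia.
by rewrite (_ : _ * _ = ((2 * a + 1) * (3 * a + 1)) * 2) ?mulzK //; lia.
Qed.

Lemma pent_inj : injective pent.
Proof.
move=> m m' eq_pent; have := pent_double m; have := pent_double m'.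
rewrite eq_pent => h h'; have /eqP : (m - m') * (3 * m + 3 * m' - 1) = 0 by nia.
by rewrite mulf_eq0 => /orP [] /eqP; lia.
Qed.

Lemma absz_le_pent (m : int) : `|m|%:Z <= pent m.
Proof. by have := pent_double m; case: (ltrP m 0); nia. Qed.

Lemma double_bin2 n : (2 * 'C(n.+1, 2) = n.+1 * n)%N.
Proof. by elim: n => [// | n IHn]; rewrite binS bin1; lia. Qed.

Lemma pent_pos n : pent n.+1%:Z = (n.+1 * n.+1 + 'C(n.+1, 2))%N%:Z.
Proof. by have := pent_double n.+1%:Z; have := double_bin2 n; nia. Qed.

Lemma pent_neg n : pent (- n.+1%:Z) = (n.+1 * n.+1 + 'C(n.+2, 2))%N%:Z.
Proof. by have := pent_double (- n.+1%:Z); have := double_bin2 n.+1; nia. Qed.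

Definition pent_monomial (m : int) : {poly int} := (-1) ^+ `|m|%N * 'X^(absz (pent m)).

Definition pentagonal_poly n := \sum_(j < (2 * n).+1) pent_monomial (j%:Z - n%:Z).

Lemma pentagonal_polyS n :
  pentagonal_poly n.+1 = pentagonal_poly n + pent_monomial n.+1%:Z + pent_monomial (- n.+1%:Z).
Proof.
rewrite /pentagonal_poly (_ : (2 * n.+1).+1 = (2 * n).+3)%N; last by lia.
rewrite big_ord_recl big_ord_recr /= (_ : 0%:Z - n.+1%:Z = - n.+1%:Z); last by lia.
rewrite /bump /= (_ : (1 + (2 * n).+1)%N%:Z - n.+1%:Z = n.+1%:Z); last by lia.
have shift (j : 'I_(2 * n).+1) : (1 + j)%N%:Z - n.+1%:Z = j%:Z - n%:Z by lia.
under eq_bigr do rewrite shift.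
by rewrite [pent_monomial (- _) + _]addrC.
Qed.

Lemma coef_pent_monomial m i :
  (pent_monomial m)`_i = (-1) ^+ `|m|%N * (pent m == i%:Z)%:R.
Proof.
rewrite /pent_monomial (_ : (-1) ^+ _ = ((-1) ^+ `|m|%N)%:P); last first.
  by rewrite rmorphXn rmorphN1.
rewrite coefCM coefXn.
congr (_ * (nat_of_bool _)%:R); have le_m := absz_le_pent m.
by apply/idP/idP => /eqP; lia.
Qed.

Lemma coef_pentagonal_poly n i : (i <= n)%N -> (pentagonal_poly n)`_i = dpent i%:Z.
Proof.
move=> le_i_n; rewrite coef_sum /dpent /=.
under eq_bigr do rewrite coef_pent_monomial.
have not_pent (j : 'I_(2 * n).+1) m : m != j%:Z - n%:Z -> (pent (j%:Z - n%:Z) == pent m) = false.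
  by move=> ne_m; apply/negbTE/eqP => /pent_inj eq_m; rewrite eq_m eqxx in ne_m.
(* [pent m = i] forces [|m| <= i <= n]: the unique such [m] lies both in the
   search range of [dpent] and in the range of the sum. *)
case: pickP => [j0 /eqP pent_j0 | no_pent].
  have := absz_le_pent (j0%:Z - i%:Z); rewrite pent_j0 => le_j0.
  have lt_j : (absz (j0%:Z - i%:Z + n%:Z)%R < (2 * n).+1)%N by lia.
  rewrite (bigD1 (Ordinal lt_j)) //= big1 ?addr0.
    have -> : (absz (j0%:Z - i%:Z + n%:Z))%:Z - n%:Z = j0%:Z - i%:Z by lia.
    by rewrite pent_j0 eqxx mulr1.
  move=> j ne_j; rewrite -pent_j0 not_pent ?mulr0 //.
  by apply: contra ne_j => /eqP eq_j; apply/eqP/val_inj => /=; lia.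
rewrite big1 // => j _; have [pent_j | _] := eqVneq (pent (j%:Z - n%:Z)) i%:Z; last first.
  by rewrite mulr0.
have := absz_le_pent (j%:Z - n%:Z); rewrite pent_j => le_j.
have lt_j : (absz (j%:Z - n%:Z + i%:Z)%R < (2 * i).+1)%N by lia.
move: (no_pent (Ordinal lt_j)) => /=.
by rewrite (_ : (absz (j%:Z - n%:Z + i%:Z))%:Z - i%:Z = j%:Z - n%:Z) ?pent_j ?eqxx //; lia.
Qed.

Definition prod_1subX (a b : nat) : {poly int} := \prod_(a <= i < b) (1 - 'X^i).

Lemma prod_1subX_id a : prod_1subX a a = 1.
Proof. by rewrite /prod_1subX big_geq. Qed.

Lemma prod_1subXSr a b : (a <= b)%N -> prod_1subX a b.+1 = prod_1subX a b * (1 - 'X^b).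
Proof. by move=> le_ab; rewrite /prod_1subX big_nat_recr. Qed.

Lemma prod_1subXSl a b : (a < b)%N -> prod_1subX a b = (1 - 'X^a) * prod_1subX a.+1 b.
Proof. by move=> lt_ab; rewrite /prod_1subX big_ltn. Qed.

(* The two sides of Shanks' identity (D. Shanks, 1951):
   sum_(k <= n) (-1)^k x^(nk + k(k+1)/2) prod_(k < i <= n) (1 - x^i)
     = sum_(-n <= m <= n) (-1)^m x^(m(3m-1)/2). *)
Definition shanks_term n k : {poly int} :=
  (-1) ^+ k * 'X^(n * k + 'C(k.+1, 2)) * prod_1subX k.+1 n.+1.

Definition shanks_sum n := \sum_(k < n.+1) shanks_term n k.

(* [shanks_term n.+1 k - shanks_term n k] telescopes with these correction
   terms; the factor [1 - 'X^0] makes [shanks_corr n 0] vanish. *)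
Definition shanks_corr n k : {poly int} :=
  (-1) ^+ k * 'X^(n.+1 * k + 'C(k, 2)) * prod_1subX k n.+1.

Lemma shanks_corr0 n : shanks_corr n 0 = 0.
Proof. by rewrite /shanks_corr prod_1subXSl // expr0 subrr !mul0r mulr0. Qed.

Lemma shanks_termS n k : (k <= n)%N ->
  shanks_term n.+1 k - shanks_term n k = shanks_corr n k.+1 - shanks_corr n k.
Proof.
move=> le_kn; rewrite /shanks_term /shanks_corr (@prod_1subXSr k.+1 n.+1) //.
rewrite (@prod_1subXSl k n.+1) //.
set e := (n * k + 'C(k, 2))%N.
have -> : (n.+1 * k + 'C(k.+1, 2) = e + k + k)%N by rewrite /e binS bin1; lia.
have -> : (n * k + 'C(k.+1, 2) = e + k)%N by rewrite /e binS bin1; lia.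
have -> : (n.+1 * k.+1 + 'C(k.+1, 2) = e + k + k + n.+1)%N by rewrite /e binS bin1; lia.
have -> : (n.+1 * k + 'C(k, 2) = e + k)%N by rewrite /e; lia.
by rewrite !exprD !exprS; ring.
Qed.

Lemma shanks_sumS n :
  shanks_sum n.+1 = shanks_sum n + pent_monomial n.+1%:Z + pent_monomial (- n.+1%:Z).
Proof.
rewrite /shanks_sum big_ord_recr /=.
have -> : \sum_(k < n.+1) shanks_term n.+1 k
    = \sum_(k < n.+1) shanks_term n k + \sum_(k < n.+1) (shanks_corr n k.+1 - shanks_corr n k).
  rewrite -big_split /=; apply: eq_bigr => k _.
  by rewrite -(@shanks_termS n k (ltn_ord k)) addrC subrK.
rewrite -(big_mkord xpredT (fun k => shanks_corr n k.+1 - shanks_corr n k)).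
rewrite telescope_sumr // shanks_corr0 subr0 /pent_monomial pent_pos pent_neg abszN /=.
by rewrite /shanks_term /shanks_corr !prod_1subX_id !mulr1.
Qed.

Lemma shanks_identity n : shanks_sum n = pentagonal_poly n.
Proof.
elim: n => [|n IHn]; last by rewrite shanks_sumS pentagonal_polyS IHn.
rewrite /shanks_sum /pentagonal_poly !big_ord1 /shanks_term /pent_monomial prod_1subX_id /=.
by rewrite div0n muln0 mulr1.
Qed.

Lemma coef_prod_1subX N i : (i <= N)%N -> (prod_1subX 1 N.+1)`_i = dpent i%:Z.
Proof.
move=> le_iN; rewrite -(coef_pentagonal_poly le_iN) -shanks_identity.
rewrite /shanks_sum big_ord_recl coefD coef_sum big1 ?addr0.
  by rewrite /shanks_term muln0 add0n expr0 !mul1r.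
move=> k _; rewrite /shanks_term [_ * 'X^_]mulrC -mulrA coefXnM ifT //.
by apply: leq_ltn_trans le_iN _; rewrite lift0 binS bin1; nia.
Qed.

Definition partition_gf N : {poly int} := \prod_(j < N) \sum_(m < N.+1) 'X^(j.+1 * m).

Lemma coef_partition_gf N n : (partition_gf N)`_n = #|multiplicities N n|%:Z.
Proof.
rewrite /partition_gf bigA_distr_bigA /= coef_sum.
under eq_bigr do rewrite prodrXr coefXn.
rewrite -natz -sum1_card natr_sum [RHS]big_mkcond /=; apply: eq_bigr => f _.
by rewrite inE eq_sym; case: eqP.
Qed.

Lemma partition_gf_mul N :
  partition_gf N * prod_1subX 1 N.+1 = \prod_(j < N) (1 - 'X^(j.+1 * N.+1)).
Proof.
rewrite /prod_1subX big_add1 /= big_mkord -big_split /=; apply: eq_bigr => j _.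
under eq_bigr do rewrite exprM.
by rewrite mulrC -opprB mulNr -subrX1 opprB -exprM.
Qed.

Lemma coef_prod_1subXM N n : (n <= N)%N ->
  (\prod_(j < N) (1 - 'X^(j.+1 * N.+1)) : {poly int})`_n = (n == 0)%:R.
Proof.
move=> le_nN.
have [q ->] : exists q, \prod_(j < N) (1 - 'X^(j.+1 * N.+1)) = 1 + 'X^(N.+1) * q :> {poly int}.
  apply: (big_ind (fun P => exists q, P = 1 + 'X^(N.+1) * q)).
  - by exists 0; rewrite mulr0 addr0.
  - by move=> _ _ [q1 ->] [q2 ->]; exists (q1 + q2 + 'X^(N.+1) * q1 * q2); ring.
  - by move=> j _; exists (- 'X^(j * N.+1)); rewrite mulSn exprD; ring.
by rewrite coefD coef1 coefXnM ifT ?addr0.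
Qed.

(* Coefficientwise form of (sum_n p(n) x^n) * prod_(j >= 1) (1 - x^j) = 1. *)
Lemma dpent_npart_conv n :
  \sum_(q < n.+1) dpent q%:Z * (npart (n - q))%:Z = (n == 0)%:R.
Proof.
rewrite -(coef_prod_1subXM (leqnn n)) -partition_gf_mul mulrC coefM.
apply: eq_bigr => q _; rewrite coef_prod_1subX; last exact: ltn_ord q.
by rewrite coef_partition_gf (npart_multiplicities (leq_subr q n)).
Qed.

Section InverseToeplitzDet.
Variables (R : comNzRingType) (d : int -> R) (p : nat -> R) (x : R) (k : nat).
Hypothesis d_neg : forall q : int, q < 0 -> d q = 0.
Hypothesis d0 : d 0 = 1.
Hypothesis d_p_conv : forall n, \sum_(q < n.+1) d q%:Z * p (n - q)%N = (n == 0)%:R.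

Lemma p0_eq1 : p 0 = 1.
Proof. by have := d_p_conv 0; rewrite big_ord1 d0 mul1r. Qed.

Lemma sum_p_d_shift (i j : nat) :
  \sum_(l < i.+1) p (i - l)%N * d (l%:Z - j%:Z) = (i == j)%:R.
Proof.
rewrite -(big_mkord xpredT (fun l => p (i - l)%N * d (l%:Z - j%:Z))).
have d_lt_j l : (l < j)%N -> p (i - l)%N * d (l%:Z - j%:Z) = 0.
  by move=> lt_lj; rewrite d_neg ?mulr0 // subr_lt0 ltz_nat.
case: (leqP j i) => [le_ji | lt_ij]; last first.
  rewrite big1_seq; last by move=> l; rewrite mem_iota => /andP [_ lt_l]; apply: d_lt_j; lia.
  by rewrite (_ : (i == j) = false) //; apply/negbTE; lia.
rewrite (big_cat_nat (n := j)) //=; last by lia.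
rewrite big1_seq ?add0r; last first.
  by move=> l; rewrite mem_iota => /andP [_ lt_l]; apply: d_lt_j; lia.
rewrite -{1}(add0n j) big_addn (_ : (i.+1 - j = (i - j).+1)%N); last by lia.
rewrite (_ : (i == j) = (i - j == 0)%N); last by apply/eqP/eqP; lia.
rewrite -d_p_conv big_mkord; apply: eq_bigr => q _; rewrite mulrC.
by congr (d _ * p _); lia.
Qed.

Lemma sum_p_d_succ (i : nat) : \sum_(l < i.+1) p (i - l)%N * d (l%:Z + 1) = - p i.+1.
Proof.
have := d_p_conv i.+1; rewrite big_ord_recl /= subn0 d0 mul1r => conv.
apply: (addrI (p i.+1)); rewrite subrr -[RHS]conv; congr (_ + _).
by apply: eq_bigr => l _; rewrite mulrC /bump /= add1n subSS; congr (d _ * _); lia.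
Qed.

Definition toeplitz_p_mx : 'M[R]_k := \matrix_(i, j) (if (j <= i)%N then p (i - j)%N else 0).

Definition pent_mx : 'M[R]_k := \matrix_(i, j) (d (i%:Z - j%:Z) - x * d (i%:Z - j%:Z + 1)).

Definition shift_pent_mx : 'M[R]_k := \matrix_(i, j)
  ((i == j :> nat)%:R - x * ((i.+1 == j :> nat)%:R - (j == 0 :> nat)%:R * p i.+1)).

Lemma mul_toeplitz_pent_mx : toeplitz_p_mx *m pent_mx = shift_pent_mx.
Proof.
apply/matrixP => i j; rewrite !mxE.
pose F l := p (i - l)%N * (d (l%:Z - j%:Z) - x * d (l%:Z - j%:Z + 1)).
transitivity (\sum_(l < i.+1) F l).
  rewrite (big_ord_widen k F) // [RHS]big_mkcond /=; apply: eq_bigr => l _.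
  by rewrite !mxE ltnS; case: ifP; rewrite ?mul0r.
rewrite {}/F; under eq_bigr do rewrite mulrBr mulrCA.
rewrite sumrB -mulr_sumr sum_p_d_shift.
case: j => [[|j] /= lt_jk].
  under eq_bigr do rewrite subr0.
  by rewrite sum_p_d_succ mul1r; case: (nat_of_ord i) => [|i'] /=; ring.
have shift l : l%:Z - j.+1%:Z + 1 = l%:Z - j%:Z by lia.
under eq_bigr do rewrite shift.
by rewrite sum_p_d_shift mul0r subr0 eqSS.
Qed.

Definition powers_row0_mx : 'M[R]_k :=
  \matrix_(i, j) (if i == 0 :> nat then x ^+ j else (i == j :> nat)%:R).

Definition lower_pent_mx : 'M[R]_k := \matrix_(i, j)
  (if i == 0 :> nat then (j == 0 :> nat)%:R * \sum_(n < k.+1) p n * x ^+ n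
   else shift_pent_mx i j).

Lemma sum_delta (F : nat -> R) m :
  \sum_(l < k) F l * (l == m :> nat)%:R = if (m < k)%N then F m else 0.
Proof.
case: ltnP => [lt_mk | le_km].
  rewrite (bigD1 (Ordinal lt_mk)) //= eqxx mulr1 big1 ?addr0 // => l.
  by rewrite -val_eqE /= => /negbTE ->; rewrite mulr0.
rewrite big1 // => l _; have lt_lk := ltn_ord l.
by rewrite (_ : (l == m :> nat) = false) ?mulr0 //; apply/negbTE; lia.
Qed.

Lemma mul_powers_shift_pent_mx : powers_row0_mx *m shift_pent_mx = lower_pent_mx.
Proof.
apply/matrixP => i j; rewrite !mxE.
have [i0 | i_neq0] := eqVneq (nat_of_ord i) 0%N; last first.
  rewrite (bigD1 i) //= big1 ?addr0 => [|l ne_li]; rewrite !mxE (negbTE i_neq0) ?eqxx ?mul1r //.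
  by rewrite eq_sym -val_eqE /= in ne_li; rewrite (negbTE ne_li) mul0r.
under eq_bigr do rewrite !mxE i0 /= mulrBr mulrCA.
rewrite sumrB (sum_delta (fun l => x ^+ l)) ltn_ord -mulr_sumr.
case: j => [[|j] lt_jk] /=.
  under eq_bigr do rewrite add0r mulrN.
  rewrite sumrN mulrN opprK mul1r expr0 mulr_sumr big_ord_recl p0_eq1 expr0 mulr1.
  by congr (_ + _); apply: eq_bigr => l _; rewrite exprS; ring.
under eq_bigr do rewrite mul0r subr0 eqSS.
by rewrite (sum_delta (fun l => x ^+ l)) ifT ?mul0r -?exprS ?subrr //; lia.
Qed.

Lemma det_toeplitz_p_mx : \det toeplitz_p_mx = 1.
Proof.
rewrite det_trig; last by apply/is_trig_mxP => a b lt_ab; rewrite mxE leqNgt lt_ab.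
by rewrite big1 // => a _; rewrite mxE leqnn subnn p0_eq1.
Qed.

Lemma det_powers_row0_mx : \det powers_row0_mx = 1.
Proof.
rewrite -det_tr det_trig; last first.
  apply/is_trig_mxP => a b lt_ab; rewrite !mxE.
  by rewrite gtn_eqF ?gtn_eqF //; apply: leq_ltn_trans lt_ab.
by rewrite big1 // => a _; rewrite !mxE eqxx; case: eqP => // ->.
Qed.

Lemma det_lower_pent_mx : (0 < k)%N -> \det lower_pent_mx = \sum_(n < k.+1) p n * x ^+ n.
Proof.
move=> k_gt0; pose i0 := Ordinal k_gt0.
rewrite (expand_det_row _ i0) (bigD1 i0) //= big1 ?addr0 => [|j ne_j0]; last first.
  rewrite mxE /= (_ : (j == 0 :> nat) = false) ?mul0r //.
  by apply/negbTE; rewrite -val_eqE in ne_j0.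
rewrite mxE /= mul1r /cofactor addn0 expr0 mul1r -det_tr det_trig; last first.
  apply/is_trig_mxP => a b lt_ab; rewrite !mxE /= /bump /=.
  by rewrite !gtn_eqF ?mul0r ?subr0 ?mulr0 ?subr0 //; apply: leq_trans lt_ab.
rewrite [\prod_(_ < _) _]big1 ?mulr1 // => a _; rewrite !mxE /= /bump /= eqxx.
by rewrite gtn_eqF ?mul0r ?subr0 ?mulr0 ?subr0.
Qed.

Lemma det_pent_mx : (0 < k)%N -> \det pent_mx = \sum_(n < k.+1) p n * x ^+ n.
Proof.
move=> k_gt0; rewrite -det_lower_pent_mx // -mul_powers_shift_pent_mx -mul_toeplitz_pent_mx.
by rewrite !det_mulmx det_powers_row0_mx det_toeplitz_p_mx !mul1r.
Qed.

End InverseToeplitzDet.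

Lemma dpent0 : dpent 0 = 1.
Proof. by rewrite /dpent /=; case: pickP => [j _ | /(_ ord0)] //=; rewrite (ord1 j). Qed.

Theorem mainTheorem9 (k : nat) (x : Cplx) : (1 <= k)%N ->
  \sum_(n < k.+1) (npart n)%:R * x ^+ n =
  \det (\matrix_(i < k, j < k)
          ((dpent (i%:Z - j%:Z))%:~R - x * (dpent (i%:Z - j%:Z + 1))%:~R)
        : 'M[Cplx]_k).
Proof.
move=> k_gt0; pose d q : Cplx := (dpent q)%:~R; pose p n : Cplx := (npart n)%:R.
have d_neg q : q < 0 -> d q = 0 by rewrite /d /dpent => ->.
have d0 : d 0 = 1 by rewrite /d dpent0.
have d_p_conv n : \sum_(q < n.+1) d q%:Z * p (n - q)%N = (n == 0)%:R.
  have := congr1 (fun z : int => z%:~R : Cplx) (dpent_npart_conv n).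
  rewrite /= mulrz_sumr mulrz_nat => <-.
  by apply: eq_bigr => q _; rewrite intrM -pmulrn.
by rewrite (det_pent_mx x d_neg d0 d_p_conv k_gt0).
Qed.
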